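(* Let $S$ be a set of $9$ points of $PG(3,2)$ which is a strong blocking set, i.e. for every plane $\sigma$ of $PG(3,2)$ the points of $\sigma\cap S$ span $\sigma$. Then: (i) every plane $\pi$ of $PG(3,2)$ contains at most $5$ points of $S$; (ii) if a plane $\pi$ contains a line $\ell$ all of whose points lie in $S$, then $\pi$ contains exactly $5$ points of $S$, and these $5$ points form two lines (each entirely contained in $S$) meeting in a point.
   Context: $PG(3,2)$ is the $3$-dimensional projective space over $\mathbb{F}_2$ (15 points, each line has 3 points, each plane has 7 points). A strong blocking set in $PG(3,2)$ is a set of points $S$ such that for every plane (hyperplane) $\sigma$, the span $\langle \sigma\cap S\rangle$ equals $\sigma$. The minimum possible size of a strong blocking set in $PG(3,2)$ is $9$; a strong blocking set of size $9$ is called a minimal strong blocking set. A ''line of $S$'' means a projective line all of whose points belong to $S$. *)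

From mathcomp Require Import all_boot all_order all_algebra.
Set Implicit Arguments. Unset Strict Implicit. Unset Printing Implicit Defensive.
Import GRing.Theory.
Local Open Scope ring_scope.

Definition vec := 'rV['F_2]_4.
Definition point := {x : vec | x != 0}.

Definition span_pts (P : {set point}) : {set point} :=
  [set y : point | (val y <= \sum_(x in P) <<val x>>)%MS].

Definition plane (a : point) : {set point} :=
  [set x : point | val x *m (val a)^T == 0].

Definition is_line (L : {set point}) : Prop :=
  exists x y : point, x != y /\ L = span_pts [set x; y].

Definition strong_blocking (S : {set point}) : Prop :=
  forall a : point, span_pts (plane a :&: S) = plane a.

From mathcomp Require Import all_boot all_order all_algebra zify.
Set Implicit Arguments. Unset Strict Implicit. Unset Printing Implicit Defensive.
Import GRing.Theory.
Local Open Scope ring_scope.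

(* (i) If a plane a met S in six or more points, the at most three points of S
   off a could all be avoided by a second plane b; then b meets S inside the
   line b meets a in, which does not span b.
   (ii) The three planes through a line l of S partition the twelve points
   off l, so they share the six points of S off l; by (i) each gets at most
   two, hence exactly two.  Two points p, q of a plane off a line l of that
   plane span a line meeting l in p + q, so the plane meets S in two lines.
   The incidence facts of PG(3,2) used here are checked by computation, on
   points encoded as quadruples of booleans. *)

Section FiniteSetCounting.
Variable T : finType.
Implicit Types S L P D : {set T}.

Lemma subset_set3_of_card_le3 (d : T) D : (#|D| <= 3)%N ->
  exists x y z, [/\ x \in d |: D, y \in d |: D, z \in d |: D & D \subset [set x; y; z]].
Proof.
move=> cD; set s := enum D; have nth_in i : nth d s i \in d |: D.
  case: (ltnP i (size s)) => Hi; last by rewrite nth_default ?setU11.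
  by rewrite setU1r // -mem_enum mem_nth.
exists (nth d s 0), (nth d s 1), (nth d s 2); split => //.
apply/subsetP => w wD; have ws : w \in s by rewrite mem_enum.
have := nth_index d ws; have : (index w s < 3)%N.
  by rewrite (leq_trans _ cD) // cardE index_mem.
by case: (index w s) => [|[|[|]]] // _ <-; rewrite !inE eqxx ?orbT.
Qed.

Lemma card_setI_subset_split S L P : L \subset S -> L \subset P ->
  #|P :&: S| = (#|L| + #|(S :\: L) :&: P|)%N.
Proof.
move=> LS LP; rewrite -(cardsID L (P :&: S)); congr (_ + _)%N.
  apply: eq_card => z; rewrite !inE.
  by case: (boolP (z \in L)) => zL; rewrite ?andbF ?(subsetP LS) ?(subsetP LP).
by apply: eq_card => z; rewrite !inE; case: (z \in L); case: (z \in S); case: (z \in P).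
Qed.

Lemma card_partition3 D (P0 P1 P2 : {set T}) :
  (forall z, z \in D -> (z \in P0) + (z \in P1) + (z \in P2) = 1)%N ->
  (#|D :&: P0| + #|D :&: P1| + #|D :&: P2|)%N = #|D|.
Proof.
move=> part; have cardI P : #|D :&: P| = (\sum_(z in D) (z \in P))%N.
  rewrite -sum1_card (eq_bigl (fun z => (z \in D) && (z \in P))) => [|z]; last by rewrite inE.
  by rewrite big_mkcondr /=; apply: eq_bigr => z _; case: (z \in P).
rewrite !cardI -!big_split /= -sum1_card; exact: eq_bigr.
Qed.

Lemma setI_eq_setU_triple S L P (p q w : T) : L \subset S -> L \subset P -> w \in L ->
  (S :\: L) :&: P = [set p; q] ->
  P :&: S = L :|: [set p; q; w] /\ L :&: [set p; q; w] = [set w].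
Proof.
move=> LS LP wL Epq; have memE z : (z \in (S :\: L) :&: P) = (z \in [set p; q]) by rewrite Epq.
have [pL qL] : p \notin L /\ q \notin L.
  move: (memE p) (memE q); rewrite !inE !eqxx ?orbT ?orTb.
  by move=> /andP[/andP[-> _] _] /andP[/andP[-> _] _].
split; apply/setP => z; rewrite !inE; case: (boolP (z \in L)) => zL /=.
- by rewrite (subsetP LP) ?(subsetP LS).
- have /negbTE-> : z != w by apply: contraNneq zL => ->.
  by move: (memE z); rewrite !inE zL andbC orbF.
- have /negbTE-> : z != p by apply: contraTneq zL => ->.
  by have /negbTE-> : z != q by apply: contraTneq zL => ->.
- by apply/esym/negbTE; apply: contraNneq zL => ->.
Qed.

End FiniteSetCounting.

Definition code := (bool * bool * bool * bool)%type.

Definition code0 : code := (false, false, false, false).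

Definition code_add (c d : code) : code :=
  let '(a0, a1, a2, a3) := c in let '(b0, b1, b2, b3) := d in
  (a0 (+) b0, a1 (+) b1, a2 (+) b2, a3 (+) b3).

Definition code_dot (c d : code) : bool :=
  let '(a0, a1, a2, a3) := c in let '(b0, b1, b2, b3) := d in
  (a0 && b0) (+) (a1 && b1) (+) (a2 && b2) (+) (a3 && b3).

Definition code_bit (c : code) (j : 'I_4) : bool :=
  let '(b0, b1, b2, b3) := c in nth b3 [:: b0; b1; b2] j.

Definition F2_of_bool (b : bool) : 'F_2 := if b then 1 else 0.

Definition vec_of_code (c : code) : vec := \row_j F2_of_bool (code_bit c j).

Definition code_of_vec (v : vec) : code :=
  let b k := v 0 (inord k) == 1 in (b 0, b 1, b 2, b 3)%N.

Lemma F2_eq01 (e : 'F_2) : e = 0 \/ e = 1.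
Proof. by case: e => [[|[|//]] ?]; [left | right]; apply/val_inj. Qed.

Lemma F2_of_boolK (e : 'F_2) : F2_of_bool (e == 1) = e.
Proof. by case: (F2_eq01 e) => ->. Qed.

Lemma F2_of_bool_eq1 (b : bool) : (F2_of_bool b == 1) = b.
Proof. by case: b. Qed.

Lemma F2_of_boolD (a b : bool) : F2_of_bool a + F2_of_bool b = F2_of_bool (a (+) b).
Proof. by case: a; case: b; rewrite /= ?addr0 ?add0r //; apply/eqP. Qed.

Lemma F2_of_boolM (a b : bool) : F2_of_bool a * F2_of_bool b = F2_of_bool (a && b).
Proof. by case: a; case: b; rewrite /= ?mulr0 ?mul0r ?mulr1. Qed.

Lemma code_of_vecK : cancel code_of_vec vec_of_code.
Proof.
move=> v; apply/rowP => j; rewrite mxE.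
case: j => [[|[|[|[|//]]]] ?] /=; rewrite F2_of_boolK; congr (v _ _); apply/val_inj;
  by rewrite /= inordK.
Qed.

Lemma vec_of_codeK : cancel vec_of_code code_of_vec.
Proof.
case=> [[[b0 b1] b2] b3].
by rewrite /code_of_vec !mxE !F2_of_bool_eq1 /code_bit !inordK.
Qed.

Lemma vec_of_code_inj : injective vec_of_code.
Proof. exact: can_inj vec_of_codeK. Qed.

Lemma vec_of_code_eq0 (c : code) : (vec_of_code c == 0) = (c == code0).
Proof.
by rewrite -(inj_eq vec_of_code_inj); congr (_ == _); apply/rowP => j; rewrite !mxE;
  case: j => [[|[|[|[|//]]]] ?].
Qed.

Lemma vec_of_codeD (c d : code) :
  vec_of_code c + vec_of_code d = vec_of_code (code_add c d).
Proof.
case: c => [[[a0 a1] a2] a3]; case: d => [[[b0 b1] b2] b3].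
by apply/rowP => j; rewrite !mxE F2_of_boolD; case: j => [[|[|[|[|//]]]] ?].
Qed.

Lemma vec_of_code_orthoE (c d : code) :
  (vec_of_code c *m (vec_of_code d)^T == 0) = ~~ code_dot c d.
Proof.
have -> : vec_of_code c *m (vec_of_code d)^T = (F2_of_bool (code_dot c d))%:M.
  apply/matrixP => i j; rewrite !ord1 !mxE !big_ord_recr big_ord0 /= !mxE.
  case: c => [[[a0 a1] a2] a3]; case: d => [[[b0 b1] b2] b3].
  by rewrite !F2_of_boolM add0r !F2_of_boolD mulr1n.
by case: (code_dot c d); [apply/negbTE/matrix_nonzero1 | rewrite /= raddf0 eqxx].
Qed.

Definition code_of_point (p : point) : code := code_of_vec (val p).

Lemma code_of_pointK (p : point) : vec_of_code (code_of_point p) = val p.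
Proof. exact: code_of_vecK. Qed.

Lemma code_of_point_neq0 (p : point) : code_of_point p != code0.
Proof. by rewrite -vec_of_code_eq0 code_of_pointK (valP p). Qed.

Lemma code_of_point_inj : injective code_of_point.
Proof. by move=> p q E; apply/val_inj; rewrite -!code_of_pointK E. Qed.

Lemma code_of_point_onto (c : code) : c != code0 -> exists p : point, code_of_point p = c.
Proof.
rewrite -vec_of_code_eq0 => c0; exists (Sub (vec_of_code c) c0 : point).
by rewrite /code_of_point SubK vec_of_codeK.
Qed.

Definition incident (a x : code) : bool := ~~ code_dot x a.

Lemma in_planeE (a x : point) :
  (x \in plane a) = incident (code_of_point a) (code_of_point x).
Proof. by rewrite inE /incident -vec_of_code_orthoE !code_of_pointK. Qed.

(* The default [x] is only returned in the degenerate case [x = y]. *)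
Definition third (x y : point) : point := insubd x (val x + val y).

Lemma val_third (x y : point) : x != y -> val (third x y) = val x + val y.
Proof.
have opp1 : -1 = 1 :> 'F_2 by apply/eqP.
by move=> xy; rewrite insubdK // unfold_in /= addr_eq0 -scaleN1r opp1 scale1r.
Qed.

Lemma code_of_third (x y : point) : x != y ->
  code_of_point (third x y) = code_add (code_of_point x) (code_of_point y).
Proof.
by move=> xy; apply: vec_of_code_inj; rewrite -vec_of_codeD !code_of_pointK val_third.
Qed.

Definition line (x y : point) : {set point} := [set x; y; third x y].

Lemma span_pts_sub_plane (P : {set point}) (a : point) :
  P \subset plane a -> span_pts P \subset plane a.
Proof.
move=> Pa; apply/subsetP => z; rewrite !inE -sub_kermx => /submx_trans-> //.
by apply/sumsmx_subP => w /(subsetP Pa); rewrite genmxE inE -sub_kermx.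
Qed.

Lemma span_pts2 (x y : point) : x != y -> span_pts [set x; y] = line x y.
Proof.
move=> xy; apply/setP => z; rewrite !inE big_setU1 ?inE //= big_set1.
rewrite (adds_eqmx (genmxE _) (genmxE _)); apply/idP/idP.
  case/sub_addsmxP => -[u v] /=; rewrite [u]mx11_scalar [v]mx11_scalar !mul_scalar_mx.
  rewrite -!(inj_eq val_inj) val_third //=.
  case: (F2_eq01 (u 0 0)) => ->; case: (F2_eq01 (v 0 0)) => ->;
    rewrite ?scale0r ?scale1r ?addr0 ?add0r => E; rewrite E ?eqxx ?orbT //.
  by move: (valP z); rewrite /= E eqxx.
case/orP => [/orP[]|] /eqP->; [exact: addsmxSl | exact: addsmxSr |].
by rewrite val_third // addmx_sub_adds.
Qed.

Lemma third_neq (x y : point) : x != y -> (x != third x y) && (y != third x y).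
Proof.
move=> xy; apply/andP; split; apply/eqP => /(congr1 val); rewrite val_third //.
  by rewrite -{1}[val x]addr0 => /addrI/esym/eqP; apply/negP/(valP y).
by rewrite -{1}[val y]add0r => /addIr/esym/eqP; apply/negP/(valP x).
Qed.

Lemma card_line (x y : point) : x != y -> #|line x y| = 3%N.
Proof.
move=> xy; have /andP[xt yt] := third_neq xy.
by rewrite /line setUC cardsU1 cards2 !inE negb_or !(eq_sym (third x y)) xy xt yt.
Qed.

Definition nonzero_codes : seq code :=
  [:: (true, false, false, false); (false, true, false, false); (true, true, false, false);
      (false, false, true, false); (true, false, true, false); (false, true, true, false);
      (true, true, true, false); (false, false, false, true); (true, false, false, true);
      (false, true, false, true); (true, true, false, true); (false, false, true, true);
      (true, false, true, true); (false, true, true, true); (true, true, true, true)].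

Lemma mem_nonzero_codes (c : code) : (c \in nonzero_codes) = (c != code0).
Proof. by case: c => [[[[] []] []] []]. Qed.

Definition codes_on (a : code) : seq code := [seq x <- nonzero_codes | incident a x].

Definition codes_off (a : code) : seq code := [seq x <- nonzero_codes | ~~ incident a x].

Definition line_code (x y : code) : seq code := [:: x; y; code_add x y].

Lemma code_of_point_in (p : point) : code_of_point p \in nonzero_codes.
Proof. by rewrite mem_nonzero_codes code_of_point_neq0. Qed.

Lemma code_of_point_on (a x : point) :
  x \in plane a -> code_of_point x \in codes_on (code_of_point a).
Proof. by rewrite mem_filter code_of_point_in andbT in_planeE. Qed.

Lemma code_of_point_off (a x : point) :
  x \notin plane a -> code_of_point x \in codes_off (code_of_point a).
Proof. by rewrite mem_filter code_of_point_in andbT in_planeE. Qed.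

Lemma in_lineE (x y z : point) : x != y ->
  (z \in line x y) = (code_of_point z \in line_code (code_of_point x) (code_of_point y)).
Proof. by move=> xy; rewrite !inE -code_of_third // !(inj_eq code_of_point_inj) orbA. Qed.

Lemma has_nonzero_codes (P : pred code) :
  has P nonzero_codes -> exists p : point, P (code_of_point p).
Proof.
by case/hasP => c; rewrite mem_nonzero_codes => /code_of_point_onto[p <-]; exists p.
Qed.

Lemma plane_subset_eq (a b : point) : plane a \subset plane b -> a = b.
Proof.
have cert : all (fun a => all (fun b => (a == b) ||
    has (fun z => incident a z && ~~ incident b z) nonzero_codes) nonzero_codes) nonzero_codes.
  by vm_compute.
move/allP: cert => /(_ _ (code_of_point_in a))/allP/(_ _ (code_of_point_in b)).
case/orP => [/eqP/code_of_point_inj // | /has_nonzero_codes[z]].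
by rewrite -!in_planeE => /andP[za /negP zb] /subsetP/(_ z za).
Qed.

Lemma exists_point_off_plane (a : point) : exists d : point, d \notin plane a.
Proof.
have cert : all (fun a => has (fun d => ~~ incident a d) nonzero_codes) nonzero_codes.
  by vm_compute.
have /has_nonzero_codes[d] := allP cert _ (code_of_point_in a).
by rewrite -in_planeE; exists d.
Qed.

Lemma exists_plane_avoiding3 (a x y z : point) :
  x \notin plane a -> y \notin plane a -> z \notin plane a ->
  exists2 b : point, b != a & [/\ x \notin plane b, y \notin plane b & z \notin plane b].
Proof.
have cert : all (fun a => all (fun x => all (fun y => all (fun z =>
    has (fun b => [&& b != a, ~~ incident b x, ~~ incident b y & ~~ incident b z])
      nonzero_codes) (codes_off a)) (codes_off a)) (codes_off a)) nonzero_codes.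
  by vm_compute.
move=> /code_of_point_off xa /code_of_point_off ya /code_of_point_off za.
move/allP: cert => /(_ _ (code_of_point_in a))/allP/(_ _ xa)/allP/(_ _ ya)/allP/(_ _ za).
case/has_nonzero_codes => b /and4P[ba xb yb zb]; exists b.
  by apply: contra ba => /eqP->.
by rewrite !in_planeE.
Qed.

Lemma line_sub_planeE (x y a : point) : x != y ->
  (line x y \subset plane a) =
  all (incident (code_of_point a)) (line_code (code_of_point x) (code_of_point y)).
Proof.
move=> xy; apply/subsetP/allP => [sub c | all_on z].
  rewrite /line_code -code_of_third // !inE => /or3P[] /eqP->;
    by rewrite -in_planeE sub // !inE eqxx ?orbT.
by rewrite in_lineE // in_planeE => /all_on.
Qed.

Lemma planes_through_line_partition (a x y : point) : x != y -> x \in plane a -> y \in plane a ->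
  exists b1 b2 : point, [/\ line x y \subset plane b1, line x y \subset plane b2 &
    forall z, z \notin line x y ->
      ((z \in plane a) + (z \in plane b1) + (z \in plane b2) = 1)%N].
Proof.
(* The third plane through the line has dual coordinates a + b1. *)
have cert : all (fun a => all (fun x => all (fun y => (x == y) ||
    has (fun b => let b' := code_add a b in
      [&& b' != code0, all (incident b) (line_code x y), all (incident b') (line_code x y) &
      all (fun z => (z \in line_code x y) ||
                    (incident a z + incident b z + incident b' z == 1)%N) nonzero_codes])
      nonzero_codes) (codes_on a)) (codes_on a)) nonzero_codes.
  by vm_compute.
move=> xy /code_of_point_on xa /code_of_point_on ya.
move/allP: cert => /(_ _ (code_of_point_in a))/allP/(_ _ xa)/allP/(_ _ ya).
rewrite (inj_eq code_of_point_inj) (negbTE xy) orFb.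
case/has_nonzero_codes => b1 /and4P[/code_of_point_onto[b2 <-] b1_on b2_on /allP part].
exists b1, b2; split; rewrite ?line_sub_planeE // => z /negbTE zl.
rewrite in_lineE // in zl.
by apply/eqP; move: (part _ (code_of_point_in z)); rewrite zl -!in_planeE.
Qed.

Lemma coplanar_lines_meet (a x y p q : point) : x != y -> p != q ->
  x \in plane a -> y \in plane a -> p \in plane a -> q \in plane a ->
  p \notin line x y -> q \notin line x y -> third p q \in line x y.
Proof.
have cert : all (fun a => all (fun x => all (fun y => all (fun p => all (fun q =>
    [|| x == y, p == q, p \in line_code x y, q \in line_code x y |
        code_add p q \in line_code x y])
    (codes_on a)) (codes_on a)) (codes_on a)) (codes_on a)) nonzero_codes.
  by vm_compute.
move=> xy pq /code_of_point_on xa /code_of_point_on ya /code_of_point_on pa /code_of_point_on qa.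
rewrite (in_lineE p xy) (in_lineE q xy) (in_lineE (third p q) xy) (code_of_third pq).
move=> /negbTE px /negbTE qx.
move/allP: cert => /(_ _ (code_of_point_in a))/allP/(_ _ xa)/allP/(_ _ ya)/allP/(_ _ pa)/allP/(_ _ qa).
by rewrite !(inj_eq code_of_point_inj) (negbTE xy) (negbTE pq) px qx.
Qed.

Lemma strong_blocking_plane_eq (S : {set point}) (a b : point) :
  strong_blocking S -> plane a :&: S \subset plane b -> a = b.
Proof. by move=> SB /span_pts_sub_plane; rewrite SB => /plane_subset_eq. Qed.

Lemma strong_blocking_card_plane_le5 (S : {set point}) (a : point) :
  #|S| = 9%N -> strong_blocking S -> (#|plane a :&: S| <= 5)%N.
Proof.
move=> cS SB; rewrite leqNgt; apply/negP => big.
set T := S :\: plane a.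
have cT : (#|T| <= 3)%N by have := cardsID (plane a) S; rewrite setIC cS -/T; lia.
have [d da] := exists_point_off_plane a.
have offT w : w \in d |: T -> w \notin plane a.
  by rewrite in_setU1 in_setD => /orP[/eqP-> // | /andP[]].
have [x [y [z [/offT xa /offT ya /offT za Txyz]]]] := subset_set3_of_card_le3 d cT.
have [b /negP ba [xb yb zb]] := exists_plane_avoiding3 xa ya za.
apply/ba/eqP/(strong_blocking_plane_eq SB)/subsetP => w /setIP[wb wS].
apply: contraT => wa; have : w \in [set x; y; z] by rewrite (subsetP Txyz) // in_setD wa.
by rewrite !inE => /orP[/orP[]|] /eqP wE; [move: xb | move: yb | move: zb]; rewrite -wE wb.
Qed.

Lemma strong_blocking_card_plane_off_line (S : {set point}) (a x y : point) :
  #|S| = 9%N -> strong_blocking S -> x != y ->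
  line x y \subset plane a -> line x y \subset S -> #|(S :\: line x y) :&: plane a| = 2%N.
Proof.
move=> cS SB xy la lS.
have [xa ya] : x \in plane a /\ y \in plane a by split; apply: (subsetP la); rewrite !inE eqxx ?orbT.
have [b1 [b2 [lb1 lb2 part]]] := planes_through_line_partition xy xa ya.
have partD z : z \in S :\: line x y ->
    ((z \in plane a) + (z \in plane b1) + (z \in plane b2) = 1)%N.
  by rewrite in_setD => /andP[/part].
have le2 b : line x y \subset plane b -> (#|(S :\: line x y) :&: plane b| <= 2)%N.
  move=> lb; have := strong_blocking_card_plane_le5 b cS SB.
  by rewrite (card_setI_subset_split lS lb) card_line.
have := card_partition3 partD; rewrite cardsDS // cS card_line //.
move: (le2 _ la) (le2 _ lb1) (le2 _ lb2); lia.
Qed.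

Lemma strong_blocking_plane_two_lines (S : {set point}) (a : point) (l : {set point}) :
  #|S| = 9%N -> strong_blocking S -> is_line l -> l \subset plane a -> l \subset S ->
  #|plane a :&: S| = 5%N /\
  exists l1 l2 : {set point},
    [/\ is_line l1, is_line l2, l1 != l2, l1 \subset S & l2 \subset S] /\
    plane a :&: S = l1 :|: l2 /\ #|l1 :&: l2| = 1%N.
Proof.
move=> cS SB [x [y [xy ->]]]; rewrite span_pts2 // => la lS.
have c2 := strong_blocking_card_plane_off_line cS SB xy la lS.
split; first by rewrite (card_setI_subset_split lS la) card_line // c2.
have /cards2P[p [q [pq Epq]]] : #|(S :\: line x y) :&: plane a| == 2%N by rewrite c2.
have mem_pq z : z \in [set p; q] -> [/\ z \in S, z \notin line x y & z \in plane a].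
  by rewrite -Epq in_setI in_setD => /andP[/andP[zl zS] za].
have /mem_pq[pS pl pa] : p \in [set p; q] by rewrite !inE eqxx.
have /mem_pq[qS ql qa] : q \in [set p; q] by rewrite !inE eqxx orbT.
have [xa ya] : x \in plane a /\ y \in plane a by split; apply: (subsetP la); rewrite !inE eqxx ?orbT.
have meet := coplanar_lines_meet xy pq xa ya pa qa pl ql.
have [-> capE] := setI_eq_setU_triple lS la meet Epq.
exists (line x y), (line p q); split; last by rewrite capE cards1.
split=> //; try by [exists x, y; rewrite span_pts2 | exists p, q; rewrite span_pts2].
  by apply: contraNneq pl => ->; rewrite !inE eqxx.
apply/subsetP => z; rewrite /line !inE => /orP[/orP[]|] /eqP-> //.
exact: (subsetP lS).
Qed.

Theorem lemma2p1 (S : {set point}) :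
  #|S| = 9%N -> strong_blocking S ->
  (forall a : point, #|plane a :&: S| <= 5)%N /\
  (forall (a : point) (l : {set point}),
      is_line l -> l \subset plane a -> l \subset S ->
      #|plane a :&: S| = 5%N /\
      exists l1 l2 : {set point},
        [/\ is_line l1, is_line l2, l1 != l2, l1 \subset S &
             l2 \subset S] /\
        plane a :&: S = l1 :|: l2 /\ #|l1 :&: l2| = 1%N).
Proof.
move=> cS SB; split=> [a | a l]; first exact: strong_blocking_card_plane_le5.
exact: strong_blocking_plane_two_lines.
Qed.
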